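(* Let $L$ be a Lie algebra over a field $k$ generated by its pure extremal elements, let $x,y\in E$ with $g(x,y)=1$ and let $L=\bigoplus_{i=-2}^2L_i$ be the associated $5$-grading. Let $\varphi=\exp(y)\exp(x)\exp(y)$. Then $\varphi(x)=y$, $\varphi(y)=x$, $\varphi(l_{-1})=[y,l_{-1}]$, $\varphi(l_0)=l_0+[x,[y,l_0]]$ and $\varphi(l_1)=[x,l_1]$ for all $l_{-1}\in L_{-1}$, $l_0\in L_0$, $l_1\in L_1$.
   Context: A nonzero $a\in L$ is extremal if there is $g_a\colon L\to k$ with $[a,[a,u]]=2g_a(u)a$, $[[a,u],[a,w]]=g_a([u,w])a+g_a(w)[a,u]-g_a(u)[a,w]$, $[a,[u,[a,w]]]=g_a([u,w])a-g_a(w)[a,u]-g_a(u)[a,w]$ for all $u,w$; sandwiches satisfy $[a,[a,u]]=0=[a,[u,[a,w]]]$ (and then $g_a=0$ by convention); pure = non-sandwich; $E$ = set of extremal elements; $g$ = unique symmetric bilinear form with $g(a,u)=g_a(u)$ for $a\in E$. $\exp(a)(u)=u+[a,u]+g_a(u)a$. The $5$-grading associated with $x,y$: $L_{-2}=kx$, $L_{-1}=[x,U]$, $L_0=\{l:[x,l]\in kx,[y,l]\in ky\}$, $L_1=[y,U]$, $L_2=ky$, $U=\{u:g(u,x)=g(u,y)=g(u,[x,y])=0\}$. *)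

From HB Require Import structures.
From mathcomp Require Import all_boot all_algebra.
Set Implicit Arguments. Unset Strict Implicit. Unset Printing Implicit Defensive.
Import GRing.Theory.
Local Open Scope ring_scope.

Definition is_lie_bracket (k : fieldType) (L : lmodType k) (br : L -> L -> L) :=
  [/\ (forall (c : k) u v w, br (c *: u + v) w = c *: br u w + br v w),
      (forall (c : k) u v w, br w (c *: u + v) = c *: br w u + br w v),
      (forall u, br u u = 0) &
      (forall u v w, br u (br v w) + br v (br w u) + br w (br u v) = 0)].

Definition is_sym_bilinear (k : fieldType) (L : lmodType k) (g : L -> L -> k) :=
  [/\ (forall (c : k) u v w, g (c *: u + v) w = c * g u w + g v w),
      (forall (c : k) u v w, g w (c *: u + v) = c * g w u + g w v) &
      (forall u v, g u v = g v u)].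

Section Extremal.
Variables (k : fieldType) (L : lmodType k) (br : L -> L -> L).

Definition extremal_with (a : L) (ga : L -> k) :=
  a != 0 /\
  forall u w,
  [/\ br a (br a u) = (2 * ga u) *: a,
      br (br a u) (br a w) = ga (br u w) *: a + ga w *: br a u - ga u *: br a w &
      br a (br u (br a w)) = ga (br u w) *: a - ga w *: br a u - ga u *: br a w].

Definition extremal (a : L) := exists ga, extremal_with a ga.

Definition sandwich (a : L) :=
  forall u w, br a (br a u) = 0 /\ br a (br u (br a w)) = 0.

Definition pure_extremal (a : L) := extremal a /\ ~ sandwich a.

Definition lie_generated_by (A : L -> Prop) :=
  forall P : L -> Prop,
    P 0 -> (forall (c : k) u v, P u -> P v -> P (c *: u + v)) ->
    (forall u v, P u -> P v -> P (br u v)) ->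
    (forall a, A a -> P a) -> forall u, P u.

Definition is_extremal_form (g : L -> L -> k) :=
  is_sym_bilinear g /\
  forall a, extremal a -> extremal_with a (g a) /\ (sandwich a -> forall u, g a u = 0).

Definition lexp (g : L -> L -> k) (a u : L) : L := u + br a u + g a u *: a.

Definition gradU (g : L -> L -> k) (x y u : L) :=
  g u x = 0 /\ g u y = 0 /\ g u (br x y) = 0.
Definition grad_m1 g (x y l : L) := exists u, gradU g x y u /\ l = br x u.
Definition grad_0 (x y l : L) :=
  (exists c : k, br x l = c *: x) /\ (exists c : k, br y l = c *: y).
Definition grad_1 g (x y l : L) := exists u, gradU g x y u /\ l = br y u.

End Extremal.

From HB Require Import structures.
From mathcomp Require Import all_boot all_algebra.
From mathcomp Require Import ring.
Set Implicit Arguments.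
Unset Strict Implicit.
Unset Printing Implicit Defensive.
Import GRing.Theory.
Local Open Scope ring_scope.

(* For extremal a, exp(a) is an automorphism of L with inverse exp(-a), so it
   maps extremal elements to extremal elements; since
   [a,b] = exp(a)b - b - g(a,b)a, the span of the extremal elements is closed
   under brackets and hence is all of L.  The identity
   g(a,[b,u]) = -g(b,[a,u]), valid for extremal a and b, therefore extends to
   g(u,[v,w]) = -g(v,[u,w]) for extremal v and arbitrary u; for u in U it gives
   g(x,[y,u]) = g(u,[x,y]) = 0.  With this, the defining identities of x and y
   evaluate the three exponentials on each graded piece one factor at a time. *)

Section LinearLaws.
Variables (R : pzRingType) (U V : lmodType R) (f : U -> V).
Hypothesis f_lin : forall c u v, f (c *: u + v) = c *: f u + f v.

Lemma lin0 : f 0 = 0.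
Proof.
by have := f_lin 1 0 0; rewrite !scale1r addr0 => E; apply: (addrI (f 0)); rewrite addr0 -E.
Qed.

Lemma linD u v : f (u + v) = f u + f v.
Proof. by have := f_lin 1 u v; rewrite !scale1r. Qed.

Lemma linZ c u : f (c *: u) = c *: f u.
Proof. by rewrite -[c *: u]addr0 f_lin lin0 addr0. Qed.

Lemma linN u : f (- u) = - f u.
Proof. by rewrite -scaleN1r linZ scaleN1r. Qed.

End LinearLaws.

(* A reflexive decision procedure for identities in a module: both sides are
   reified over a common list of atoms and compared coefficientwise by [ring]
   ([all_below] unfolds to one conjunct per atom). *)
Section LmodNormalization.
Variables (R : pzRingType) (V : lmodType R).

Inductive lmod_term :=
  | LAtom of nat
  | LZero
  | LAdd of lmod_term & lmod_term
  | LOpp of lmod_term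
  | LScale of R & lmod_term.

Fixpoint lmod_eval (atoms : seq V) (t : lmod_term) : V :=
  match t with
  | LAtom n => atoms`_n
  | LZero => 0
  | LAdd t1 t2 => lmod_eval atoms t1 + lmod_eval atoms t2
  | LOpp t1 => - lmod_eval atoms t1
  | LScale c t1 => c *: lmod_eval atoms t1
  end.

Fixpoint lmod_coef (t : lmod_term) (i : nat) : R :=
  match t with
  | LAtom n => if eqn n i then 1 else 0
  | LZero => 0
  | LAdd t1 t2 => lmod_coef t1 i + lmod_coef t2 i
  | LOpp t1 => - lmod_coef t1 i
  | LScale c t1 => c * lmod_coef t1 i
  end.

Lemma lmod_evalE atoms t :
  lmod_eval atoms t = \sum_(i < size atoms) lmod_coef t i *: atoms`_i.
Proof.
elim: t => [n||t1 IH1 t2 IH2|t1 IH1|c t1 IH1] /=.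
- have [n_lt|n_ge] := ltnP n (size atoms).
    rewrite (bigD1 (Ordinal n_lt) isT) /= eqnE eqxx scale1r big1 ?addr0 // => i ne_i.
    case: eqP => [n_i|_]; last by rewrite scale0r.
    by move: ne_i; rewrite -val_eqE /= -n_i eqxx.
  rewrite nth_default // big1 // => i _; rewrite eqnE.
  by case: eqP => [n_i|]; [move: (ltn_ord i); rewrite -n_i ltnNge n_ge | rewrite scale0r].
- by rewrite big1 // => i _; rewrite scale0r.
- by rewrite IH1 IH2 -big_split; apply: eq_bigr => i _; rewrite scalerDl.
- by rewrite IH1 -sumrN; apply: eq_bigr => i _; rewrite scaleNr.
- by rewrite IH1 scaler_sumr; apply: eq_bigr => i _; rewrite scalerA.
Qed.

Fixpoint all_below (n : nat) (P : nat -> Prop) : Prop :=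
  if n is m.+1 then P m /\ all_below m P else True.

Lemma all_belowP n P : all_below n P -> forall i, (i < n)%N -> P i.
Proof.
elim: n => [|n IH] //= [Pn /IH Pm] i.
by rewrite ltnS leq_eqVlt => /orP[/eqP->|/Pm].
Qed.

Lemma lmod_eval_eq atoms t1 t2 :
  all_below (size atoms) (fun i => lmod_coef t1 i = lmod_coef t2 i) ->
  lmod_eval atoms t1 = lmod_eval atoms t2.
Proof.
by move/all_belowP=> Ecoef; rewrite !lmod_evalE; apply: eq_bigr => i _; rewrite Ecoef.
Qed.

End LmodNormalization.

Arguments LAtom {R}. Arguments LZero {R}. Arguments LAdd {R}. Arguments LOpp {R}.
Arguments LScale {R}. Arguments lmod_eval {R V}.

Ltac lmod_mem x l :=
  lazymatch l with
  | nil => constr:(false)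
  | cons x _ => constr:(true)
  | cons _ ?t => lmod_mem x t
  end.

Ltac lmod_atoms t l :=
  match t with
  | ?a + ?b => let l1 := lmod_atoms a l in lmod_atoms b l1
  | - ?a => lmod_atoms a l
  | _ *: ?a => lmod_atoms a l
  | 0 => l
  | _ => let b := lmod_mem t l in
         lazymatch b with true => l | false => constr:(cons t l) end
  end.

Ltac lmod_index x l :=
  lazymatch l with
  | cons x _ => constr:(0%N)
  | cons _ ?t => let n := lmod_index x t in constr:(S n)
  end.

Ltac lmod_reify R t l :=
  match t with
  | ?a + ?b =>
      let ea := lmod_reify R a l in let eb := lmod_reify R b l in constr:(LAdd ea eb)
  | - ?a => let ea := lmod_reify R a l in constr:(LOpp ea)
  | ?c *: ?a => let ea := lmod_reify R a l in constr:(LScale c ea)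
  | 0 => constr:(@LZero R)
  | _ => let n := lmod_index t l in constr:(@LAtom R n)
  end.

Ltac lmod_ring :=
  lazymatch goal with
  | |- @eq ?T ?A ?B =>
    let R := open_constr:(_ : pzRingType) in
    let V := open_constr:(_ : lmodType R) in
    unify T (GRing.Lmodule.sort V);
    let l0 := lmod_atoms A (@nil T) in
    let l := lmod_atoms B l0 in
    let ea := lmod_reify R A l in
    let eb := lmod_reify R B l in
    change (@lmod_eval R V l ea = lmod_eval l eb); apply: lmod_eval_eq;
    cbn -[GRing.add GRing.mul GRing.opp GRing.zero GRing.one]; repeat split; ring
  end.

Section ExtremalForm.
Variables (k : fieldType) (L : lmodType k) (br : L -> L -> L) (g : L -> L -> k).

Hypothesis br_lie : is_lie_bracket br.

Lemma br_linl w c u v : br (c *: u + v) w = c *: br u w + br v w.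
Proof. by case: br_lie. Qed.

Lemma br_linr w c u v : br w (c *: u + v) = c *: br w u + br w v.
Proof. by case: br_lie. Qed.

Lemma br0l w : br 0 w = 0.
Proof. exact: (lin0 (f := fun u => br u w) (br_linl w)). Qed.
Lemma br0r w : br w 0 = 0.
Proof. exact: (lin0 (br_linr w)). Qed.
Lemma brDl u v w : br (u + v) w = br u w + br v w.
Proof. exact: (linD (f := fun u => br u w) (br_linl w)). Qed.
Lemma brDr u v w : br w (u + v) = br w u + br w v.
Proof. exact: (linD (br_linr w)). Qed.
Lemma brZl c u w : br (c *: u) w = c *: br u w.
Proof. exact: (linZ (f := fun u => br u w) (br_linl w)). Qed.
Lemma brZr c u w : br w (c *: u) = c *: br w u.
Proof. exact: (linZ (br_linr w)). Qed.
Lemma brNl u w : br (- u) w = - br u w.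
Proof. exact: (linN (f := fun u => br u w) (br_linl w)). Qed.
Lemma brNr u w : br w (- u) = - br w u.
Proof. exact: (linN (br_linr w)). Qed.

Lemma brxx u : br u u = 0.
Proof. by case: br_lie. Qed.

Lemma brC u v : br u v = - br v u.
Proof.
have /eqP := brxx (u + v).
by rewrite brDl !brDr !brxx add0r addr0 addr_eq0 => /eqP.
Qed.

Lemma br_leibniz a u w : br a (br u w) = br (br a u) w + br u (br a w).
Proof.
have [_ _ _ jacobi] := br_lie.
have -> : br a (br u w) = - (br u (br w a) + br w (br a u)).
  by apply/eqP; rewrite -addr_eq0 addrA jacobi.
rewrite (brC w (br a u)) (brC w a) brNr; lmod_ring.
Qed.

Hypothesis g_sym : is_sym_bilinear g.

Lemma gC u v : g u v = g v u.
Proof. by case: g_sym. Qed.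

Lemma g_linr w c u v : g w (c *: u + v) = c * g w u + g w v.
Proof. by case: g_sym. Qed.

Lemma g_linl w c u v : g (c *: u + v) w = c * g u w + g v w.
Proof. by rewrite !(gC _ w) g_linr. Qed.

Lemma g0l w : g 0 w = 0.
Proof. exact: (lin0 (V := k^o) (f := fun u => g u w) (g_linl w)). Qed.
Lemma g0r w : g w 0 = 0.
Proof. exact: (lin0 (V := k^o) (f := g w) (g_linr w)). Qed.
Lemma gDr u v w : g w (u + v) = g w u + g w v.
Proof. exact: (linD (V := k^o) (f := g w) (g_linr w)). Qed.
Lemma gZr c u w : g w (c *: u) = c * g w u.
Proof. exact: (linZ (V := k^o) (f := g w) (g_linr w)). Qed.
Lemma gNl u w : g (- u) w = - g u w.
Proof. exact: (linN (V := k^o) (f := fun u => g u w) (g_linl w)). Qed.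
Lemma gNr u w : g w (- u) = - g w u.
Proof. exact: (linN (V := k^o) (f := g w) (g_linr w)). Qed.

Hypothesis g_extremal : forall a, extremal br a ->
  extremal_with br a (g a) /\ (sandwich br a -> forall u, g a u = 0).

Lemma extremal_neq0 a : extremal br a -> a != 0.
Proof. by move=> /g_extremal [[]]. Qed.

Lemma extremal_ad2 a u : extremal br a -> br a (br a u) = (2 * g a u) *: a.
Proof. by move=> /g_extremal [[_ /(_ u u) []]]. Qed.

Lemma extremal_br_ad a u w : extremal br a ->
  br (br a u) (br a w) = g a (br u w) *: a + g a w *: br a u - g a u *: br a w.
Proof. by move=> /g_extremal [[_ /(_ u w) []]]. Qed.

Lemma extremal_ad_br_ad a u w : extremal br a ->
  br a (br u (br a w)) = g a (br u w) *: a - g a w *: br a u - g a u *: br a w.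
Proof. by move=> /g_extremal [[_ /(_ u w) []]]. Qed.

Lemma extremal_ad_line_g0 a : extremal br a ->
  (forall u, exists c, br a u = c *: a) -> forall u, g a u = 0.
Proof.
move=> a_ext ad_line; apply: (g_extremal a_ext).2 => u w; split.
  by have [c ->] := ad_line u; rewrite brZr brxx scaler0.
have [c ->] := ad_line w; have [d ad_u] := ad_line u.
by rewrite !brZr (brC u) brNr ad_u brZr brxx !(scaler0, oppr0).
Qed.

Lemma eq_of_scaled_diff (c : k) (P Q A B : L) : P = Q -> A - B = c *: (P - Q) -> A = B.
Proof. by move=> -> /eqP; rewrite subrr scaler0 subr_eq0 => /eqP. Qed.

Lemma extremal_centralizer_ad a b u : extremal br a -> br a b = 0 ->
  g a (br b u) *: a = g a b *: br a u.
Proof.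
move=> a_ext ab0; have := extremal_ad_br_ad b u a_ext.
rewrite br_leibniz ab0 br0l add0r extremal_ad2 // brZr (brC b a) ab0 oppr0 !scaler0.
by move=> E; apply: (eq_of_scaled_diff (c := -1) E); lmod_ring.
Qed.

Lemma extremal_centralizer_g0 a b : extremal br a -> br a b = 0 -> g a b = 0.
Proof.
move=> a_ext ab0; have [//|gab_neq0] := eqVneq (g a b) 0.
apply: (extremal_ad_line_g0 a_ext) => u; exists (g a (br b u) / g a b).
by rewrite mulrC -scalerA extremal_centralizer_ad // scalerA mulVf // scale1r.
Qed.

Lemma extremal_centralizer_g_ad0 a b u : extremal br a -> br a b = 0 -> g a (br b u) = 0.
Proof.
move=> a_ext ab0; have /eqP := extremal_centralizer_ad u a_ext ab0.
rewrite (extremal_centralizer_g0 a_ext ab0) scale0r scaler_eq0.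
by rewrite (negbTE (extremal_neq0 a_ext)) orbF => /eqP.
Qed.

Lemma extremal_g_self0 a : extremal br a -> g a a = 0.
Proof. by move=> a_ext; rewrite extremal_centralizer_g0 ?brxx. Qed.

Lemma extremal_g_ad0 a u : extremal br a -> g a (br a u) = 0.
Proof. by move=> a_ext; rewrite extremal_centralizer_g_ad0 ?brxx. Qed.

Lemma extremal_br_neq0 a b : extremal br a -> g a b != 0 -> br a b != 0.
Proof. by move=> a_ext; apply: contraNneq => /(extremal_centralizer_g0 a_ext)->. Qed.

Lemma extremal_g_skew a b u : extremal br a -> extremal br b ->
  g a (br b u) = - g b (br a u).
Proof.
move=> a_ext b_ext; apply/eqP; rewrite -addr_eq0.
have [ab0|ab_neq0] := eqVneq (br a b) 0.
  rewrite extremal_centralizer_g_ad0 // (extremal_centralizer_g_ad0 _ b_ext) ?addr0 //.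
  by rewrite brC ab0 oppr0.
have ba_neq0 : br b a != 0 by rewrite brC oppr_eq0.
(* Expand [b,[a,[b,[a,u]]]] by the third identity for a, then for b. *)
have E := congr1 (br b) (extremal_ad_br_ad b u a_ext).
rewrite extremal_ad_br_ad // !brDr !brNr !brZr (brC a b) brNr in E.
rewrite !extremal_ad2 // gZr (gC b a) in E.
have : (g a (br b u) + g b (br a u)) *: br b a = 0.
  by apply: (eq_of_scaled_diff (c := -1) E); lmod_ring.
by move/eqP; rewrite scaler_eq0 (negbTE ba_neq0) orbF.
Qed.

Lemma extremal_normalizer_opp a b l c d : extremal br a -> extremal br b -> g a b = 1 ->
  br a l = c *: a -> br b l = d *: b -> d = - c.
Proof.
move=> a_ext b_ext gab al bl.
by have := extremal_g_skew l a_ext b_ext; rewrite al bl !gZr gab (gC b) gab !mulr1.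
Qed.

Lemma extremal_normalizer_g0 a b l c d : extremal br a -> extremal br b -> g a b = 1 ->
  br a l = c *: a -> br b l = d *: b -> g a l = 0.
Proof.
move=> a_ext b_ext gab al bl; have dc := extremal_normalizer_opp a_ext b_ext gab al bl.
have := extremal_ad_br_ad b l a_ext.
rewrite al !brZr (brC b a) brNr extremal_ad2 // bl gZr gab dc => E.
have /eqP : g a l *: br a b = 0 by apply: (eq_of_scaled_diff (c := 1) E); lmod_ring.
by rewrite scaler_eq0 (negbTE (extremal_br_neq0 a_ext _)) ?gab ?oner_neq0 // orbF => /eqP.
Qed.

Local Notation Exp := (lexp br g).

Lemma lexp_lin a c u v : Exp a (c *: u + v) = c *: Exp a u + Exp a v.
Proof. rewrite /lexp br_linr g_linr; lmod_ring. Qed.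

Lemma lexp_self a : extremal br a -> Exp a a = a.
Proof. by move=> a_ext; rewrite /lexp brxx extremal_g_self0 // scale0r !addr0. Qed.

Lemma lexp_br a u w : extremal br a -> Exp a (br u w) = br (Exp a u) (Exp a w).
Proof.
move=> a_ext; rewrite /lexp !brDl !brDr !brZl !brZr (br_leibniz a u w).
rewrite (brC u a) (brC (br a u) a) !extremal_ad2 // extremal_br_ad // brxx; lmod_ring.
Qed.

Lemma extremalN a : extremal br a -> extremal br (- a).
Proof.
move=> a_ext; exists (fun u => - g a u); split; first by rewrite oppr_eq0 extremal_neq0.
move=> u w; rewrite !(brNl, brNr) ?opprK.
rewrite extremal_ad2 // extremal_br_ad // extremal_ad_br_ad //; split; lmod_ring.
Qed.

Lemma lexpK a : extremal br a -> cancel (Exp (- a)) (Exp a).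
Proof.
move=> a_ext u; rewrite /lexp !brDr !brZr !brNl !brNr !gDr !gZr !gNl !gNr brxx.
rewrite extremal_ad2 // extremal_g_self0 // extremal_g_ad0 //; lmod_ring.
Qed.

Lemma lexpNK a : extremal br a -> cancel (Exp a) (Exp (- a)).
Proof. by move=> /extremalN /lexpK; rewrite opprK. Qed.

Lemma extremal_lexp a b : extremal br a -> extremal br b -> extremal br (Exp a b).
Proof.
move=> a_ext b_ext; exists (fun u => g b (Exp (- a) u)); split.
  apply: contra_neq (extremal_neq0 b_ext) => ab0.
  by rewrite -(lexpNK a_ext b) ab0 (lin0 (lexp_lin _)).
move=> u w.
have [{}u ->] : exists u', u = Exp a u' by exists (Exp (- a) u); rewrite lexpK.
have [{}w ->] : exists w', w = Exp a w' by exists (Exp (- a) w); rewrite lexpK.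
rewrite -!lexp_br // !lexpNK // extremal_ad2 // extremal_br_ad // extremal_ad_br_ad //.
by rewrite !(linD (lexp_lin a), linN (lexp_lin a), linZ (lexp_lin a)).
Qed.

Inductive ext_span : L -> Prop :=
  | ext_span0 : ext_span 0
  | ext_span_lin c u v : ext_span u -> ext_span v -> ext_span (c *: u + v)
  | ext_span_extremal a : extremal br a -> ext_span a.

Lemma ext_span_br u v : ext_span u -> ext_span v -> ext_span (br u v).
Proof.
have span_br_extremal a b : extremal br a -> extremal br b -> ext_span (br a b).
  move=> a_ext b_ext.
  have -> : br a b = (-1) *: b + ((- g a b) *: a + Exp a b) by rewrite /lexp; lmod_ring.
  apply: ext_span_lin; [|apply: ext_span_lin]; apply: ext_span_extremal => //.
  exact: extremal_lexp.
move=> span_u span_v; elim: span_u => [|c u1 u2 _ IH1 _ IH2|a a_ext].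
- by rewrite br0l; apply: ext_span0.
- by rewrite br_linl; apply: ext_span_lin.
elim: span_v => [|c v1 v2 _ IH1 _ IH2|b b_ext].
- by rewrite br0r; apply: ext_span0.
- by rewrite br_linr; apply: ext_span_lin.
- exact: span_br_extremal.
Qed.

Hypothesis L_gen : lie_generated_by br (pure_extremal br).

Lemma ext_span_all u : ext_span u.
Proof.
apply: L_gen u; [exact: ext_span0 | exact: ext_span_lin | exact: ext_span_br |].
by move=> a [a_ext _]; apply: ext_span_extremal.
Qed.

Lemma g_ad_skew u v w : extremal br v -> g u (br v w) = - g v (br u w).
Proof.
move=> v_ext; elim: (ext_span_all u) => [|c u1 u2 _ IH1 _ IH2|a a_ext].
- by rewrite g0l br0l g0r oppr0.
- by rewrite g_linl br_linl g_linr IH1 IH2 mulrN opprD.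
- exact: extremal_g_skew.
Qed.

Section Grading.
Variables x y : L.
Hypotheses (x_ext : extremal br x) (y_ext : extremal br y) (gxy : g x y = 1).

Local Notation phi l := (Exp y (Exp x (Exp y l))).

Let gyx : g y x = 1.
Proof. by rewrite gC. Qed.

Lemma gradU_g_x_ad u : gradU br g x y u -> g x (br y u) = 0.
Proof. by move=> [_ [_ guxy]]; rewrite brC gNr -g_ad_skew // guxy oppr0. Qed.

Lemma gradU_g_y_ad u : gradU br g x y u -> g y (br x u) = 0.
Proof. by move=> U_u; rewrite extremal_g_skew // gradU_g_x_ad // oppr0. Qed.

Lemma phi_x : phi x = y.
Proof.
have inner : Exp y x = x - br x y + y by rewrite /lexp gyx scale1r (brC y x).
have middle : Exp x (x - br x y + y) = y.
  rewrite /lexp !brDr brNr brxx extremal_ad2 // !gDr gNr extremal_g_self0 //.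
  by rewrite extremal_g_ad0 // gxy; lmod_ring.
by rewrite inner middle lexp_self.
Qed.

Lemma phi_y : phi y = x.
Proof.
have middle : Exp x y = y + br x y + x by rewrite /lexp gxy scale1r.
have outer : Exp y (y + br x y + x) = x.
  rewrite /lexp (brC x y) !brDr !brNr brxx extremal_ad2 // !gDr !gNr extremal_g_self0 //.
  by rewrite extremal_g_ad0 // gyx; lmod_ring.
by rewrite lexp_self // middle outer.
Qed.

Lemma phi_grad_m1 l : grad_m1 br g x y l -> phi l = br y l.
Proof.
move=> [u [U_u ->]]; have gxu : g x u = 0 by rewrite gC; case: U_u.
have gyxu := gradU_g_y_ad U_u.
have inner : Exp y (br x u) = br x u + br y (br x u) by rewrite /lexp gyxu scale0r addr0.
have middle : Exp x (br x u + br y (br x u)) = br y (br x u).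
  rewrite /lexp !brDr extremal_ad2 // extremal_ad_br_ad // !gDr extremal_g_ad0 //.
  rewrite [g x (br y (br x u))]extremal_g_skew // extremal_ad2 // gZr gxu mulr0 mul0r oppr0.
  by rewrite gradU_g_x_ad // gxy; lmod_ring.
have outer : Exp y (br y (br x u)) = br y (br x u).
  by rewrite /lexp extremal_ad2 // extremal_g_ad0 // gyxu; lmod_ring.
by rewrite inner middle outer.
Qed.

Lemma phi_grad_0 l : grad_0 br x y l -> phi l = l + br x (br y l).
Proof.
move=> [[c xl] [d yl]].
have gxl := extremal_normalizer_g0 x_ext y_ext gxy xl yl.
have gyl := extremal_normalizer_g0 y_ext x_ext gyx yl xl.
have dc := extremal_normalizer_opp x_ext y_ext gxy xl yl.
have inner : Exp y l = l + d *: y by rewrite /lexp yl gyl scale0r addr0.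
have middle : Exp x (l + d *: y) = l + d *: y + d *: br x y.
  by rewrite /lexp brDr brZr xl !gDr gZr gxl gxy dc; lmod_ring.
have outer : Exp y (l + d *: y + d *: br x y) = l + d *: br x y.
  rewrite /lexp (brC x y) !brDr !brZr yl brxx brNr extremal_ad2 // !gDr !gZr gNr.
  by rewrite extremal_g_self0 // extremal_g_ad0 // gyl gyx; lmod_ring.
by rewrite inner middle outer yl brZr.
Qed.

Lemma phi_grad_1 l : grad_1 br g x y l -> phi l = br x l.
Proof.
move=> [u [U_u ->]]; have gyu : g y u = 0 by rewrite gC; case: U_u => _ [].
have gxyu := gradU_g_x_ad U_u.
have inner : Exp y (br y u) = br y u.
  by rewrite /lexp extremal_ad2 // extremal_g_ad0 // gyu; lmod_ring.
have middle : Exp x (br y u) = br y u + br x (br y u) by rewrite /lexp gxyu scale0r addr0.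
have outer : Exp y (br y u + br x (br y u)) = br x (br y u).
  rewrite /lexp !brDr extremal_ad2 // extremal_ad_br_ad // !gDr extremal_g_ad0 //.
  rewrite [g y (br x (br y u))]extremal_g_skew // extremal_ad2 // gZr gyu mulr0 mul0r oppr0.
  by rewrite gradU_g_y_ad // gyx; lmod_ring.
by rewrite inner middle outer.
Qed.

End Grading.

End ExtremalForm.

Theorem lemma2p8 (k : fieldType) (L : lmodType k) (br : L -> L -> L)
  (g : L -> L -> k) (x y : L) :
  is_lie_bracket br ->
  lie_generated_by br (pure_extremal br) ->
  is_extremal_form br g ->
  extremal br x -> extremal br y -> g x y = 1 ->
  let phi := fun l => lexp br g y (lexp br g x (lexp br g y l)) in
  [/\ phi x = y, phi y = x,
      (forall l, grad_m1 br g x y l -> phi l = br y l),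
      (forall l, grad_0 br x y l -> phi l = l + br x (br y l)) &
      (forall l, grad_1 br g x y l -> phi l = br x l)].
Proof.
move=> br_lie L_gen [g_sym g_extremal] x_ext y_ext gxy phi.
split.
- exact: phi_x.
- exact: phi_y.
- exact: phi_grad_m1.
- exact: phi_grad_0.
- exact: phi_grad_1.
Qed.
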